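(* For every $n\geq 1$, the number of Grand-Dyck paths of semilength $n$ starting with an up step and avoiding the pattern $UDU$ equals the coefficient of $z^n$ in $\frac{1-3z-\sqrt{1-2z-3z^2}}{6z-2}$, i.e. the $n$-th term of OEIS sequence A005773 ($1,1,2,5,13,35,96,\dots$ indexed from $n=0$).
   Context: A Grand-Dyck path of semilength $n$ starting with an up step is a word with exactly $n$ letters $U$ and $n$ letters $D$ whose first letter is $U$. It avoids the pattern $UDU$ if it has no three consecutive letters equal to $U,D,U$. *)

From mathcomp Require Import all_boot all_order all_algebra.
Set Implicit Arguments. Unset Strict Implicit. Unset Printing Implicit Defensive.
Import GRing.Theory Num.Theory.
Local Open Scope ring_scope.

(* A word over {U,D} is encoded as a seq bool, with true = U and false = D. *)

Definition avoids_UDU (w : seq bool) : bool := ~~ infix [:: true; false; true] w.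

Definition gd_UDU_paths (n : nat) : {set (n.*2).-tuple bool} :=
  [set w : (n.*2).-tuple bool |
     [&& count id w == n, head false w & avoids_UDU w]].

Definition num_gd_UDU (n : nat) : nat := #|gd_UDU_paths n|.

(* Formal power series over rat are represented by their coefficient sequence
   nat -> rat.  [sqrt_series s] says s is the power series sqrt(1-2z-3z^2),
   i.e. s(0) = 1 and s^2 = 1 - 2z - 3z^2 (Cauchy product). *)
Definition sqrt_series (s : nat -> rat) : Prop :=
  s 0%N = 1 /\
  forall n : nat, \sum_(i < n.+1) s i * s (n - i)%N =
    (if n == 0%N then 1 else if n == 1%N then -2 else if n == 2%N then -3 else 0).

(* [gf_series s a]: a is the power series (1 - 3z - s(z)) / (6z - 2),
   i.e. (6z - 2) a(z) = 1 - 3z - s(z), compared coefficientwise. *)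
Definition gf_series (s a : nat -> rat) : Prop :=
  forall n : nat,
    (if n == 0%N then 0 else 6 * a n.-1) - 2 * a n =
    (if n == 0%N then 1 else if n == 1%N then -3 else 0) - s n.

(* Read a word after its initial U by a three-state automaton that rejects
   UDU and counts the valleys DU: the words with p U's, q D's and j valleys
   are counted by products of binomials, so num_gd_UDU (k+1) is the sum over
   j of C(k, j) C(k+1-j, j).  Creative telescoping shows that this sum u(k)
   satisfies (k+3) u(k+2) = 2(k+3) u(k+1) + 3(k+1) u(k).  On the series side,
   v = 1 + 2a = s / (1 - 3z) satisfies ((1 - 3z) v)^2 = 1 - 2z - 3z^2, and
   differentiating gives the linear equation (1 - 2z - 3z^2) v' = 2v, which
   is the same recurrence for a(k+1).  Both sequences start with 1, 2.
   Power series are handled through their truncations, as polynomials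
   modulo X^K. *)

From mathcomp Require Import all_boot all_order all_algebra.
From mathcomp Require Import zify ring lra.
Set Implicit Arguments. Unset Strict Implicit. Unset Printing Implicit Defensive.

(** * Counting words by valleys *)

Lemma card_tuple0 (T : finType) (P : pred (seq T)) :
  #|[set w : 0.-tuple T | P w]| = P [::].
Proof.
have -> : [set w : 0.-tuple T | P w] = if P [::] then setT else set0.
  by apply/setP => w; rewrite tuple0 inE; case: (P [::]); rewrite ?inE.
by case: (P [::]); rewrite ?cardsT ?card_tuple ?cards0.
Qed.

Lemma card_tuple_cons (T : finType) m (P : pred (seq T)) :
  #|[set w : m.+1.-tuple T | P w]| = \sum_(x : T) #|[set w : m.-tuple T | P (x :: w)]|.
Proof.
rewrite -sum1_card (partition_big (@thead _ _) predT) //=.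
apply: eq_bigr => x _; rewrite -sum1_card.
rewrite (reindex (fun w : m.-tuple T => [tuple of x :: w])) /=.
  by apply: eq_bigl => w; rewrite !inE /= eqxx andbT.
exists (fun w : m.+1.-tuple T => [tuple of behead w]) => w /=.
  by move=> _; apply: val_inj.
by case/tupleP: w => y w; rewrite inE /= => /andP [_ /eqP <-]; apply: val_inj.
Qed.

Lemma card_partition_Some (T : finType) (P : pred T) (v : T -> option nat) n :
    (forall x j, P x -> v x = Some j -> j <= n) ->
  #|[set x | P x && isSome (v x)]| =
    \sum_(j < n.+1) #|[set x | P x && (v x == Some (j : nat))]|.
Proof.
move=> v_le_n; rewrite -sum1_card.
rewrite (partition_big (fun x => inord (odflt 0 (v x)) : 'I_n.+1) predT) //=.
apply: eq_bigr => j _; rewrite -sum1_card; apply: eq_bigl => x; rewrite !inE.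
case: (boolP (P x)) => //= Px; case E: (v x) => [i|] //=.
by rewrite -val_eqE /= inordK // ltnS (v_le_n x).
Qed.

(* The phase records what the last letters read force on the next one:
   [Up] after a U, [UpDown] after UD (a U now would complete UDU), and
   [DownDown] after DD (a U now closes a valley DU). *)
Inductive phase := Up | UpDown | DownDown.

(* [None] once UDU occurs. *)
Fixpoint valleys (c : phase) (w : seq bool) : option nat :=
  match w with
  | [::] => Some 0
  | true :: w' =>
      match c with
      | Up => valleys Up w'
      | UpDown => None
      | DownDown => omap S (valleys Up w')
      end
  | false :: w' => valleys (if c is Up then UpDown else DownDown) w'
  end.

Lemma valleys_avoids_UDU w :
  [/\ isSome (valleys Up w) = avoids_UDU (true :: w),
      isSome (valleys UpDown w) = avoids_UDU [:: true, false & w] &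
      isSome (valleys DownDown w) = avoids_UDU [:: false, false & w]].
Proof.
rewrite /avoids_UDU; elim: w => [|[] w [IHu _ _]] //; split=> /=.
- by rewrite IHu.
- by case: w {IHu}.
- by case: (valleys Up w) IHu => [?|] <-.
Qed.

Lemma valleys_le_count c w j : valleys c w = Some j -> j <= count id w.
Proof.
elim: w c j => [|b w IH] c j /=; first by case=> <-.
case: b; last exact: IH.
case: c => [/IH/leqW // | // |].
by case E: (valleys Up w) => [i|] // [<-]; rewrite ltnS (IH _ _ E).
Qed.

Definition compositions p j : nat :=
  if j is i.+1 then (if p is p'.+1 then 'C(p', i) else 0) else p == 0.

(* The U's form runs separated by the j valleys, and every D-run before a
   valley has length at least 2 (at least 1 for the first one in phase
   [UpDown], at least 0 in phase [DownDown]). *)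
Definition valley_count (c : phase) p q j : nat :=
  match c with
  | Up => 'C(p, j) * 'C(q - j, j)
  | UpDown => compositions p j * 'C(q.+1 - j, j)
  | DownDown => compositions p j * 'C(q.+2 - j, j)
  end.

Lemma valley_count_Up p q j : 0 < p + q ->
  valley_count Up p q j =
    (if p is p'.+1 then valley_count Up p' q j else 0) +
    (if q is q'.+1 then valley_count UpDown p q' j else 0).
Proof.
case: p q => [|p] [|q] //= _; case: j => [|j]; rewrite ?bin0 ?sub0n ?bin0n ?muln0 //.
by rewrite binS mulnDl.
Qed.

Lemma valley_count_UpDown p q j : 0 < p + q ->
  valley_count UpDown p q j = if q is q'.+1 then valley_count DownDown p q' j else 0.
Proof.
case: p q => [|p] [|q] //= _.
by case: j => [|j] //=; rewrite subSS sub0n bin0n muln0.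
Qed.

Lemma valley_count_DownDown p q j : 0 < p + q ->
  valley_count DownDown p q j =
    (if p is p'.+1 then (if j is j'.+1 then valley_count Up p' q j' else 0) else 0) +
    (if q is q'.+1 then valley_count DownDown p q' j else 0).
Proof.
case: p q => [|p] [|q] //= _; case: j => [|j] /=.
all: rewrite ?subSS ?subn0 ?sub0n ?bin0 ?bin0n ?mul0n ?muln0 ?add0n ?addn0 //.
- by case: j => [|j]; rewrite ?subSS ?sub0n ?bin0n.
- rewrite -mulnDr; congr (_ * _).
  have [le_j_q1 | lt_q1_j] := leqP j q.+1; first by rewrite subSn // binS addnC.
  by rewrite !bin_small //; lia.
Qed.

Definition valley_word c p j (w : seq bool) :=
  (count id w == p) && (valleys c w == Some j).

Lemma card_valley_words c m p q j : p + q = m ->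
  #|[set w : m.-tuple bool | valley_word c p j w]| = valley_count c p q j.
Proof.
elim: m c p q j => [|m IH] c p q j.
  move=> /eqP; rewrite addn_eq0 => /andP [/eqP-> /eqP->].
  by rewrite card_tuple0; case: c; case: j.
move=> def_m; rewrite card_tuple_cons big_bool /=.
have up_part : #|[set w : m.-tuple bool | valley_word c p j (true :: w)]| =
  if p is p'.+1 then
    match c with
    | Up => valley_count Up p' q j
    | UpDown => 0
    | DownDown => if j is j'.+1 then valley_count Up p' q j' else 0
    end
  else 0.
  case: p def_m => [|p] def_m; first by apply: eq_card0 => w; rewrite !inE.
  have {}IH := IH _ p q _ (eq_add_S _ _ def_m).
  case: c; [by rewrite -IH | by apply: eq_card0 => w; rewrite !inE /valley_word andbF |].
  case: j => [|j]; [apply: eq_card0 | rewrite -IH; apply: eq_card] => w;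
    by rewrite !inE /valley_word /=; case: (valleys Up w) => [i|]; rewrite /= ?andbF.
have down_part : #|[set w : m.-tuple bool | valley_word c p j (false :: w)]| =
  if q is q'.+1 then valley_count (if c is Up then UpDown else DownDown) p q' j else 0.
  case: q def_m {up_part} => [|q] def_m.
    apply: eq_card0 => w; rewrite !inE /valley_word /= add0n.
    have := count_size id w; rewrite size_tuple.
    by case: eqP => // ->; lia.
  by rewrite -(IH _ p q) //; apply/eq_add_S; rewrite -addnS.
have pq_gt0 : 0 < p + q by rewrite def_m.
rewrite up_part down_part; case: c {up_part down_part}.
- by rewrite valley_count_Up.
- by rewrite valley_count_UpDown //; case: p {def_m pq_gt0}.
- by rewrite valley_count_DownDown.
Qed.

Definition valley_term k j := 'C(k, j) * 'C(k.+1 - j, j).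

Definition valley_sum k := \sum_(j < k.+1) valley_term k j.

Lemma num_gd_UDU_valley_sum k : num_gd_UDU k.+1 = valley_sum k.
Proof.
rewrite /num_gd_UDU /gd_UDU_paths.
have -> : (k.+1).*2 = (k + k.+1).+1 by rewrite -addnn addSn.
rewrite (card_tuple_cons _ (fun w => [&& count id w == k.+1, head false w & avoids_UDU w])).
rewrite big_bool /= [X in _ + X]eq_card0 ?addn0 => [|w]; last by rewrite !inE andbF.
transitivity #|[set w : (k + k.+1).-tuple bool | (count id w == k) && isSome (valleys Up w)]|.
  apply: eq_card => w; have [avoid_Up _ _] := valleys_avoids_UDU w.
  by rewrite !inE add1n eqSS avoid_Up.
rewrite (card_partition_Some (n := k)) => [|w j /eqP count_w /valleys_le_count]; last first.
  by rewrite count_w.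
by apply: eq_bigr => j _; rewrite (card_valley_words Up j (erefl (k + k.+1))).
Qed.

(** * A recurrence for the binomial sum *)

Definition trinomial n i := 'C(n, i) * 'C(n - i, i).

Lemma trinomial_small n i : n < i.*2 -> trinomial n i = 0.
Proof. by move=> lt_n_2i; rewrite /trinomial (@bin_small (n - i)) ?muln0 //; lia. Qed.

Lemma trinomial_succr n i :
  i.+1 ^ 2 * trinomial n i.+1 = (n - i.*2) * (n - i.*2).-1 * trinomial n i.
Proof.
have h1 := mul_bin_left n i; have h2 := mul_bin_left (n - i.+1) i.
have h3 := mul_bin_down (n - i) i; rewrite -subnS in h3.
have -> : n - i.*2 = n - i - i by lia.
have -> : (n - i - i).-1 = n - i.+1 - i by lia.
rewrite /trinomial.
transitivity ((i.+1 * 'C(n, i.+1)) * (i.+1 * 'C(n - i.+1, i.+1))); first by ring.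
rewrite h1 h2; transitivity ('C(n, i) * (n - i.+1 - i) * ((n - i) * 'C(n - i.+1, i))).
  by ring.
by rewrite h3; ring.
Qed.

Lemma trinomial_succ n i :
  i.+1 ^ 2 * trinomial n.+1 i.+1 = n.+1 * (n - i.*2) * trinomial n i.
Proof.
have h1 := mul_bin_diag n.+1 i; have h2 := mul_bin_left (n - i) i.
have -> : n - i.*2 = n - i - i by lia.
rewrite /trinomial subSS.
transitivity ((i.+1 * 'C(n.+1, i.+1)) * (i.+1 * 'C(n - i, i.+1))); first by ring.
by rewrite -h1 h2 /=; ring.
Qed.

Lemma trinomial_succ2 n i :
  i.+1 ^ 2 * trinomial n.+2 i.+1 = n.+2 * n.+1 * trinomial n i.
Proof.
have h1 := mul_bin_diag n.+2 i; have h2 := mul_bin_diag (n.+1 - i) i.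
have h3 := mul_bin_down n.+1 i.
rewrite -subnS subSS in h2; rewrite /trinomial subSS.
transitivity ((i.+1 * 'C(n.+2, i.+1)) * (i.+1 * 'C(n.+1 - i, i.+1))); first by ring.
rewrite -h1 -h2; transitivity (n.+2 * ((n.+1 - i) * 'C(n.+1, i)) * 'C(n - i, i)).
  by ring.
by rewrite -h3; ring.
Qed.

Lemma valley_term_trinomial k j : k.+1 * valley_term k j = (k.+1 - j) * trinomial k.+1 j.
Proof. by rewrite mulnA mul_bin_down mulnA. Qed.

Import GRing.Theory Num.Theory.
Local Open Scope ring_scope.

Lemma natr_mul_pred (R : pzRingType) m : (m * m.-1)%:R = m%:R * (m%:R - 1) :> R.
Proof. by case: m => [|m]; rewrite ?mul0r // natrM -natr1 addrK. Qed.

Lemma natr_sub_double (R : pzRingType) n i :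
  (i.*2 <= n)%N -> (n - i.*2)%:R = n%:R - 2 * i%:R :> R.
Proof. by move=> le_2i_n; rewrite natrB // -mul2n natrM. Qed.

Lemma eq_divr_nat (R : numFieldType) (x y : R) c : (0 < c)%N -> c%:R * x = y -> x = y / c%:R.
Proof. by move=> c_gt0 <-; rewrite mulrAC divff ?mul1r // pnatr_eq0 -lt0n. Qed.

Lemma trinomial_succr_rat n i :
  (trinomial n i.+1)%:R =
    (n%:R - 2 * i%:R) * (n%:R - 2 * i%:R - 1) / i.+1%:R ^+ 2 * (trinomial n i)%:R :> rat.
Proof.
rewrite mulrAC -natrX; apply: eq_divr_nat; rewrite ?expn_gt0 // -[LHS]natrM trinomial_succr.
have [le_2i_n | lt_n_2i] := leqP i.*2 n; last by rewrite trinomial_small // muln0 mulr0.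
by rewrite -natr_sub_double // -natr_mul_pred -natrM.
Qed.

Lemma trinomial_succ_rat n i :
  (trinomial n.+1 i.+1)%:R =
    n.+1%:R * (n%:R - 2 * i%:R) / i.+1%:R ^+ 2 * (trinomial n i)%:R :> rat.
Proof.
rewrite mulrAC -natrX; apply: eq_divr_nat; rewrite ?expn_gt0 // -[LHS]natrM trinomial_succ.
have [le_2i_n | lt_n_2i] := leqP i.*2 n; last by rewrite trinomial_small // muln0 mulr0.
by rewrite -natr_sub_double // -!natrM.
Qed.

Lemma trinomial_succ2_rat n i :
  (trinomial n.+2 i.+1)%:R = n.+2%:R * n.+1%:R / i.+1%:R ^+ 2 * (trinomial n i)%:R :> rat.
Proof.
by rewrite mulrAC -natrX; apply: eq_divr_nat; rewrite ?expn_gt0 // -[LHS]natrM trinomial_succ2 !natrM.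
Qed.

Lemma valley_term_trinomial_rat k j :
  (valley_term k j)%:R = (k.+1%:R - j%:R) / k.+1%:R * (trinomial k.+1 j)%:R :> rat.
Proof.
rewrite mulrAC; apply: eq_divr_nat; rewrite ?expn_gt0 // -[LHS]natrM valley_term_trinomial.
have [le_j_k1 | lt_k1_j] := leqP j k.+1; first by rewrite natrM natrB.
by rewrite /trinomial bin_small // !mul0n !muln0 mulr0.
Qed.

(* The certificate produced by Zeilberger's algorithm for [valley_sum]. *)
Definition valley_cert k j : rat :=
  if j is i.+1 then (4 * i%:R - 4 * k%:R - 6) * (trinomial k.+1 i)%:R else 0.

Lemma valley_term_cert k j :
  k.+3%:R * (valley_term k.+2 j)%:R - 2 * k.+3%:R * (valley_term k.+1 j)%:R
    - 3 * k.+1%:R * (valley_term k j)%:R = valley_cert k j.+1 - valley_cert k j.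
Proof.
rewrite /valley_cert; case: j => [|i].
  by rewrite /valley_term /trinomial !bin0 !muln1 -!natr1; ring.
rewrite !valley_term_trinomial_rat.
rewrite (trinomial_succ2_rat k.+1 i) (trinomial_succ_rat k.+1 i) (trinomial_succr_rat k.+1 i).
by rewrite -!natr1; field; rewrite !natr1 !pnatr_eq0.
Qed.

Lemma valley_sum_widen k N : (k < N)%N ->
  (valley_sum k)%:R = \sum_(j < N) (valley_term k j)%:R :> rat.
Proof.
move=> lt_k_N; rewrite natr_sum (big_ord_widen N (fun j => (valley_term k j)%:R)) //.
rewrite big_mkcond; apply: eq_bigr => j _; case: ltnP => // lt_k_j.
by rewrite /valley_term bin_small.
Qed.

Lemma valley_sum_rec k :
  k.+3%:R * (valley_sum k.+2)%:R =
    2 * k.+3%:R * (valley_sum k.+1)%:R + 3 * k.+1%:R * (valley_sum k)%:R :> rat.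
Proof.
apply/eqP; rewrite -subr_eq0 opprD addrA.
rewrite !(@valley_sum_widen _ k.+3) //; last by lia.
rewrite !mulr_sumr -!sumrB; under eq_bigr => j _ do rewrite valley_term_cert.
rewrite -(big_mkord xpredT (fun j => valley_cert k j.+1 - valley_cert k j)).
by rewrite telescope_sumr // /valley_cert /trinomial bin_small // mul0n mulr0 subrr.
Qed.
(** * The generating function *)

Section DivisibilityByXn.
Variable R : fieldType.
Implicit Types p : {poly R}.

Lemma dvdp_XnP K p : reflect (forall i, (i < K)%N -> p`_i = 0) ('X^K %| p).
Proof.
apply: (iffP (dvdpP _ _)) => [[r ->] i lt_i_K | p_lt_K]; first by rewrite coefMXn lt_i_K.
exists (drop_poly K p); rewrite -{1}(poly_take_drop K p) addrC -[RHS]addr0; congr (_ + _).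
by apply/polyP => i; rewrite coef_take_poly coef0; case: ifP => // /p_lt_K.
Qed.

Lemma dvdp_Xn_deriv K p : 'X^(K.+1) %| p -> 'X^K %| p^`().
Proof.
case/dvdpP => r ->; rewrite derivM derivXn /= exprS mulrCA mulrA mulrnAr -mulrnAl.
by apply: dvdp_add; apply/dvdp_mull/dvdpp.
Qed.

Lemma coprimep_Xn K p : ~~ root p 0 -> coprimep ('X^K) p.
Proof.
move=> p0_neq0; apply: coprimep_expl.
by rewrite coprimep_sym -[X in coprimep _ X]subr0 -polyC0 coprimep_XsubC.
Qed.

Lemma dvdp_Xn_sqr_deriv K (w r : {poly R}) :
  'X^(K.+1) %| w ^+ 2 - r -> 'X^K %| r * w^`() *+ 2 - w * r^`().
Proof.
move=> w2_r; have -> : r * w^`() *+ 2 - w * r^`() =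
    w * (w ^+ 2 - r)^`() - (w ^+ 2 - r) * w^`() *+ 2.
  by rewrite derivB expr2 derivM; ring.
apply: dvdp_sub; first exact/dvdp_mull/dvdp_Xn_deriv.
rewrite -mulrnAr; apply: dvdp_mulr; apply: dvdp_trans w2_r.
by rewrite exprS; apply/dvdp_mull/dvdpp.
Qed.

End DivisibilityByXn.

Definition radicand : {poly rat} := 1 - 'X *+ 2 - 'X^2 *+ 3.

Lemma coef_radicand_ode (p : {poly rat}) n :
  (radicand * p^`() - p *+ 2)`_n.+1 =
    n.+2%:R * p`_n.+2 - 2 * n.+2%:R * p`_n.+1 - 3 * n%:R * p`_n.
Proof.
rewrite /radicand !mulrBl mul1r !mulrnAl -mulrA !coefB !coefMn !coefXM coefXnM.
by rewrite !coef_deriv; case: n => [|n] /=; rewrite ?subSS ?subn0; ring.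
Qed.

Lemma deriv_radicand : radicand^`() = - 2 - 'X *+ 6.
Proof. by rewrite /radicand !derivE /=; ring. Qed.

Lemma radicand_ode_factor (p : {poly rat}) :
  let w := (1 - 'X *+ 3) * p in
  radicand * w^`() *+ 2 - w * radicand^`() = (2 - 'X *+ 6) * (radicand * p^`() - p *+ 2).
Proof.
by rewrite /= derivM deriv_radicand derivB derivMn derivX -polyC1 derivC /radicand; ring.
Qed.

Section GeneratingFunction.
Variables s a : nat -> rat.
Hypotheses (s_sqrt : sqrt_series s) (a_gf : gf_series s a).

Let v i := (i == 0%N)%:R + 2 * a i.

Lemma trunc_sqrt_series K : 'X^K %| (\poly_(i < K) s i) ^+ 2 - radicand.
Proof.
apply/dvdp_XnP => i lt_i_K; rewrite coefB expr2 coefM.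
have <- : \sum_(j < i.+1) s j * s (i - j)%N = radicand`_i.
  rewrite (proj2 s_sqrt) /radicand !coefB coef1 !coefMn coefX coefXn.
  by case: i {lt_i_K} => [|[|[|i]]] /=; rewrite ?mulr0n ?subr0 ?sub0r.
apply/eqP; rewrite subr_eq0; apply/eqP/eq_bigr => j _.
by rewrite !coef_poly (leq_ltn_trans (leq_ord j) lt_i_K) (leq_ltn_trans (leq_subr _ _) lt_i_K).
Qed.

Lemma trunc_gf_series K :
  'X^K %| \poly_(i < K) s i - (1 - 'X *+ 3) * \poly_(i < K) v i.
Proof.
apply/dvdp_XnP => i lt_i_K.
rewrite mulrBl mul1r mulrnAl !coefB coefMn coefXM !coef_poly lt_i_K /v.
have := a_gf i; case: i lt_i_K => [|[|i]] lt_i_K /=.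
- by rewrite (proj1 s_sqrt); lra.
- by rewrite (ltnW lt_i_K); lra.
- by rewrite (ltnW lt_i_K); lra.
Qed.

Lemma trunc_gf_ode K :
  'X^K %| radicand * (\poly_(i < K.+1) v i)^`() - (\poly_(i < K.+1) v i) *+ 2.
Proof.
set V := \poly_(i < K.+1) v i; set S := \poly_(i < K.+1) s i.
rewrite -(@Gauss_dvdpr _ _ (2 - 'X *+ 6)); last first.
  by apply: coprimep_Xn; rewrite rootE !hornerE.
rewrite -radicand_ode_factor /=; set W := (1 - 'X *+ 3) * V.
apply: dvdp_Xn_sqr_deriv.
have -> : W ^+ 2 - radicand = (S ^+ 2 - radicand) - (S - W) * (S + W) by ring.
by apply: dvdp_sub; [exact: trunc_sqrt_series | apply/dvdp_mulr/trunc_gf_series].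
Qed.

Lemma gf_rec k : k.+3%:R * a k.+3 = 2 * k.+3%:R * a k.+2 + 3 * k.+1%:R * a k.+1.
Proof.
move/dvdp_XnP/(_ k.+2 (ltnSn _)): (trunc_gf_ode k.+3).
rewrite coef_radicand_ode !coef_poly /v /= !ltnS leqnn leqnSn (leqW (leqnSn _)).
lra.
Qed.

Lemma gf_coef1 : a 1 = 1.
Proof.
have := a_gf 0; have := a_gf 1; have := proj2 s_sqrt 1.
rewrite !big_ord_recl big_ord0 /= (proj1 s_sqrt); lra.
Qed.

Lemma gf_coef2 : a 2 = 2.
Proof.
move/dvdp_XnP/(_ 1%N (ltnSn _)): (trunc_gf_ode 2).
rewrite coef_radicand_ode !coef_poly /= /v /= gf_coef1; lra.
Qed.
End GeneratingFunction.

(* [u k] stands for the (k+1)-st term of the sequence. *)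
Definition a005773_rec (u : nat -> rat) :=
  forall k, k.+3%:R * u k.+2 = 2 * k.+3%:R * u k.+1 + 3 * k.+1%:R * u k.

Lemma a005773_rec_uniq u v : a005773_rec u -> a005773_rec v ->
  u 0%N = v 0%N -> u 1%N = v 1%N -> u =1 v.
Proof.
move=> rec_u rec_v eq0 eq1; suff uv k : u k = v k /\ u k.+1 = v k.+1 by move=> k; case: (uv k).
elim: k => [|k [eq_k eq_k1]] //; split=> //.
by apply: (@mulfI _ k.+3%:R); rewrite ?pnatr_eq0 // rec_u rec_v eq_k eq_k1.
Qed.

Theorem corollary2 (s a : nat -> rat) :
  sqrt_series s -> gf_series s a ->
  forall n : nat, (1 <= n)%N -> ((num_gd_UDU n)%:R = a n)%R.
Proof.
move=> s_sqrt a_gf [|k] // _; rewrite num_gd_UDU_valley_sum.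
apply: (@a005773_rec_uniq (fun k => (valley_sum k)%:R) (fun k => a k.+1)).
- exact: valley_sum_rec.
- exact: gf_rec s_sqrt a_gf.
- by rewrite (gf_coef1 s_sqrt a_gf) /valley_sum big_ord1.
- by rewrite (gf_coef2 s_sqrt a_gf) /valley_sum !big_ord_recl big_ord0.
Qed.
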